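(* Let $q$ be a prime and $b,c$ positive integers. (1) If $\frac{b+c}{\gcd(b,c)}=q$, then the threshold is $n_0(b,c;q)=\gcd(b,c)$. (2) If $\gcd(b,c)=1$ and $b+c=q^2$, then $n_0(b,c;q)=q+1$.
   Context: The Hamming graph $H(n,q)$ has vertex set $\mathbb{Z}_q^n$, two vertices adjacent iff they differ in exactly one coordinate. A $(b,c)$-coloring of $H(n,q)$ is a surjective map onto $\{1,2\}$ in which each color-1 vertex has exactly $b$ neighbours of color 2 and each color-2 vertex has exactly $c$ neighbours of color 1. The threshold $n_0(b,c;q)$ is the least $n$ such that a $(b,c)$-coloring of $H(n,q)$ exists (such colorings then exist for all $n\ge n_0$ and for no smaller $n$). *)

From mathcomp Require Import all_boot.
Set Implicit Arguments. Unset Strict Implicit. Unset Printing Implicit Defensive.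

Definition hvertex (n q : nat) : finType := {ffun 'I_n -> 'I_q}.

Definition hadj (n q : nat) (x y : hvertex n q) : bool :=
  #|[set i : 'I_n | x i != y i]| == 1.

(* Colours: [true] = colour 1, [false] = colour 2.
   Surjective onto {1,2}; each colour-1 vertex has exactly b colour-2
   neighbours; each colour-2 vertex has exactly c colour-1 neighbours. *)
Definition is_bc_coloring (n q b c : nat) (f : hvertex n q -> bool) : Prop :=
  [/\ (exists x, f x), (exists y, ~~ f y),
      (forall x, f x -> #|[set y | hadj x y & ~~ f y]| = b)
    & (forall y, ~~ f y -> #|[set x | hadj y x & f x]| = c)].

Definition has_bc_coloring (n q b c : nat) : Prop :=
  exists f : hvertex n q -> bool, is_bc_coloring b c f.

Definition is_threshold (b c q n0 : nat) : Prop :=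
  has_bc_coloring n0 q b c /\ (forall n, n < n0 -> ~ has_bc_coloring n q b c).

From mathcomp Require Import all_boot all_algebra zify.
Set Implicit Arguments. Unset Strict Implicit. Unset Printing Implicit Defensive.
Import GRing.Theory Num.Theory.

(* Colorings are built from syndromes: if every vertex of H(n,q) has exactly t
   neighbours in each fibre of a map s : H(n,q) -> G other than its own, then
   the preimage of any A in G is a (t(|G| - |A|), t|A|)-coloring. The sum of
   the coordinates in F_q (t = n) and the syndrome of the q-ary Hamming code of
   length q + 1 (t = 1, |G| = q^2) give the colorings for n = gcd(b,c) and
   n = q + 1.

   The lower bounds are spectral. A (b,c)-coloring gives an eigenvector g
   (b on colour 1, -c on colour 2) of the adjacency matrix, with eigenvalue
   n(q-1) - b - c. The adjacency matrix is sum_j (L_j - I), where L_j sums over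
   the lines in direction j; since L_j^2 = q L_j, each L_j is positive
   semidefinite, so n(q-1) - b - c >= -n, i.e. b + c <= nq. In the equality case
   L_j g = 0: every line is balanced between the colours, which forces n to
   divide both b and c. *)

Section Neighbours.
Variables n q : nat.
Implicit Types x y : hvertex n q.

Definition upd x (i : 'I_n) (v : 'I_q) : hvertex n q :=
  [ffun k => if k == i then v else x k].

Lemma upd_eq x i v : upd x i v i = v.
Proof. by rewrite ffunE eqxx. Qed.

Lemma upd_neq x i v k : k != i -> upd x i v k = x k.
Proof. by rewrite ffunE => /negbTE ->. Qed.

Lemma upd_inj x i : injective (upd x i).
Proof. by move=> v w /(congr1 (fun y => y i)); rewrite !upd_eq. Qed.

Lemma upd_id x i : upd x i (x i) = x.
Proof. by apply/ffunP=> k; rewrite ffunE; case: eqP => [->|]. Qed.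

Lemma hadjP x y : reflect (exists2 i, y i != x i & y = upd x i (y i)) (hadj x y).
Proof.
apply: (iffP cards1P) => [[i Di]|[i yxi ->]].
  have diff k : (x k != y k) = (k == i) by rewrite -[k == i]in_set1 -Di inE.
  exists i; first by rewrite eq_sym diff.
  apply/ffunP=> k; rewrite ffunE; case: eqP => [->//|/eqP ki].
  by apply/eqP; rewrite eq_sym -[_ == _]negbK diff (negbTE ki).
exists i; apply/setP=> k; rewrite !inE ffunE.
by case: (k =P i) => [->|_]; rewrite ?eqxx // eq_sym.
Qed.

Lemma hadjxx x : hadj x x = false.
Proof. by apply/hadjP => -[i]; rewrite eqxx. Qed.

Lemma card_nbr x (P : pred (hvertex n q)) :
  #|[set y | hadj x y & P y]| =
  #|[set p : 'I_n * 'I_q | (p.2 != x p.1) && P (upd x p.1 p.2)]|.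
Proof.
rewrite -(@card_in_imset _ _ (fun p : 'I_n * 'I_q => upd x p.1 p.2)).
  apply: eq_card => y; rewrite inE; apply/andP/imsetP.
    by case=> /hadjP[i yxi ->] Py; exists (i, y i); rewrite ?inE /= ?upd_eq ?yxi -?upd_eq.
  move=> [[i v]]; rewrite inE /= => /andP[vxi Pv] ->; split=> //.
  by apply/hadjP; exists i; rewrite upd_eq.
move=> [i v] [j w]; rewrite !inE /= => /andP[vxi _] _ E.
have ij : i = j.
  apply/eqP; apply: contraR vxi => ij.
  by rewrite -(upd_eq x i v) E upd_neq.
by subst j; rewrite (upd_inj E).
Qed.

End Neighbours.

Definition complete_quotient n q (G : finType) (s : hvertex n q -> G) (t : nat) :=
  forall x (B : {set G}), #|[set y | hadj x y & s y \in B]| = t * #|B :\ s x|.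

Lemma exists_set_card (T : finType) k : k <= #|T| -> exists A : {set T}, #|A| = k.
Proof.
move=> kT; exists [set x in take k (enum T)].
by rewrite cardsE (card_uniqP (take_uniq _ (enum_uniq T))) size_takel -?cardE.
Qed.

Lemma complete_quotient_coloring n q (G : finType) (s : hvertex n q -> G) t k :
  complete_quotient s t -> 0 < q -> 0 < t -> 0 < k < #|G| ->
  has_bc_coloring n q (t * (#|G| - k)) (t * k).
Proof.
move=> sP q_gt0 t_gt0 /andP[k_gt0 kG].
have [A card_A] := exists_set_card (ltnW kG); subst k.
have card_nbr_in x (B : {set G}) :
    s x \notin B -> #|[set y | hadj x y & s y \in B]| = t * #|B|.
  by move=> xB; rewrite sP (cardsD1 (s x) B) (negbTE xB).
have card_nbr_out x : s x \in A -> #|[set y | hadj x y & s y \notin A]| = t * (#|G| - #|A|).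
  move=> xA; rewrite -(cardsC A) addKn -(card_nbr_in x) ?inE ?negbK //.
  by apply: eq_card => y; rewrite !inE.
pose x0 : hvertex n q := [ffun=> Ordinal q_gt0].
have nbr_exists x (B : {set G}) : s x \notin B -> 0 < #|B| -> exists y, s y \in B.
  move=> xB B_gt0; have /card_gt0P[y] : 0 < #|[set y | hadj x y & s y \in B]|.
    by rewrite card_nbr_in // muln_gt0 t_gt0.
  by rewrite inE => /andP[_ yB]; exists y.
exists (fun x => s x \in A); split.
- have [x0A|x0A] := boolP (s x0 \in A); first by exists x0.
  exact: nbr_exists x0A k_gt0.
- have [x0A|x0A] := boolP (s x0 \in A); last by exists x0.
  have /nbr_exists[|y] : s x0 \notin ~: A by rewrite inE negbK.
    by rewrite cardsCs setCK subn_gt0.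
  by rewrite inE; exists y.
- exact: card_nbr_out.
- by move=> x /card_nbr_in.
Qed.

Section Syndrome.
Local Open Scope ring_scope.
Variables (n q : nat) (V : finLmodType 'F_q) (h : 'I_n -> V).
Hypothesis q_prime : prime q.

Lemma natr_Fp_inj : injective (fun v : 'I_q => (v : nat)%:R : 'F_q).
Proof.
move=> v w /(congr1 val) /=; rewrite !val_Fp_nat // !modn_small //.
exact: ord_inj.
Qed.

Definition syndrome (x : hvertex n q) : V := \sum_i (x i : nat)%:R *: h i.

Lemma syndrome_upd x i v :
  syndrome (upd x i v) = syndrome x + ((v : nat)%:R - (x i : nat)%:R) *: h i.
Proof.
rewrite /syndrome (bigD1 i) //= [in RHS](bigD1 i) //= upd_eq scalerBl.
rewrite (eq_bigr (fun k => (x k : nat)%:R *: h k)) => [|k ki]; last by rewrite upd_neq.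
by rewrite [RHS]addrC addrA subrK.
Qed.

Definition colmul_count (u : V) : nat :=
  #|[set p : 'I_n * 'F_q | (p.2 != 0) && (p.2 *: h p.1 == u)]|.

Lemma card_nbr_syndrome x (B : {set V}) :
  #|[set y | hadj x y & syndrome y \in B]| =
  (\sum_(g in B) colmul_count (g - syndrome x)%R)%N.
Proof.
pose shift (p : 'I_n * 'I_q) : 'I_n * 'F_q := (p.1, (p.2 : nat)%:R - (x p.1 : nat)%:R).
have shift_inj : injective shift.
  by move=> [i v] [j w] /eqP; rewrite xpair_eqE /= => /andP[/eqP <- /eqP/subIr/natr_Fp_inj ->].
have shift_bij : bijective shift.
  by apply: (inj_card_bij shift_inj); rewrite !card_prod !card_ord Fp_cast.
have /= -> := card_nbr x (fun y => syndrome y \in B).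
transitivity #|shift @^-1: [set p | (p.2 != 0) && (syndrome x + p.2 *: h p.1 \in B)]|.
  apply: eq_card => -[i v]; rewrite !inE /= syndrome_upd subr_eq0.
  by rewrite (inj_eq natr_Fp_inj).
rewrite on_card_preimset; last exact: onW_bij.
rewrite -sum1_card (partition_big (fun p => syndrome x + p.2 *: h p.1) (mem B)) /=.
  apply: eq_bigr => g gB; rewrite sum1_card; apply: eq_card => p.
  rewrite unfold_in /= !inE -andbA; case: (p.2 != 0) => //=.
  apply/andP/eqP => [[_ /eqP <-]|->]; first by rewrite [_ + _ *: _]addrC addrK.
  by rewrite addrC subrK gB.
by move=> p; rewrite inE => /andP[].
Qed.

Lemma syndrome_complete_quotient t :
  (forall u, colmul_count u = t * (u != 0)%R)%N -> complete_quotient syndrome t.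
Proof.
move=> count_t x B; rewrite card_nbr_syndrome -sum1_card big_distrr /=.
rewrite [RHS]big_mkcond [LHS]big_mkcond; apply: eq_bigr => g _.
by rewrite !inE count_t subr_eq0; case: (g \in B); case: (g != _); rewrite ?muln0.
Qed.

End Syndrome.

Section Row2.
Local Open Scope ring_scope.
Variable R : pzRingType.
Implicit Types a b c d k : R.

Definition row2 a b : 'rV[R]_2 := \row_j [:: a; b]`_j.

Lemma row2E (u : 'rV[R]_2) : u = row2 (u 0 0) (u 0 1).
Proof. by apply/rowP=> -[[|[|//]] j_lt]; rewrite mxE; congr (u 0 _); apply: val_inj. Qed.

Lemma row2_inj a b c d : row2 a b = row2 c d -> a = c /\ b = d.
Proof. by move/rowP=> E; split; [move: (E 0) | move: (E 1)]; rewrite !mxE. Qed.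

Lemma row2_eq0 a b : (row2 a b == 0) = (a == 0) && (b == 0).
Proof.
have -> : 0 = row2 0 0 by rewrite [LHS]row2E !mxE.
by apply/eqP/andP => [/row2_inj[-> ->]|[/eqP-> /eqP->]].
Qed.

Lemma scale_row2 k a b : k *: row2 a b = row2 (k * a) (k * b).
Proof. by apply/rowP=> j; rewrite !mxE; case: j => -[|[|]]. Qed.

End Row2.

Section SyndromeExamples.
Local Open Scope ring_scope.
Variable q : nat.
Hypothesis q_prime : prime q.

Lemma colmul_count_const n (u : ('F_q)^o) :
  colmul_count (fun _ : 'I_n => 1 : ('F_q)^o) u = (n * (u != 0%R))%N.
Proof.
rewrite /colmul_count.
have -> : [set p : 'I_n * 'F_q | (p.2 != 0) && (p.2 *: (1 : ('F_q)^o) == u)] =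
    setX [set: 'I_n] [set d | (d != 0) && (d == u)].
  by apply/setP=> -[i d]; rewrite !inE /= [_ *: _]mulr1.
rewrite cardsX cardsT card_ord; congr (n * _)%N.
have [->|u_neq0] := eqVneq u 0.
  by apply/eqP; rewrite cards_eq0; apply/eqP/setP=> d; rewrite !inE andNb.
rewrite /= -(cards1 u); apply: eq_card => d; rewrite !inE.
by case: (d =P u) => [->|_]; rewrite ?andbT ?andbF.
Qed.

(* One representative of each point of the projective line over F_q: the
   columns of a parity-check matrix of the Hamming code of length q + 1. *)
Definition pline_col (i : 'I_q.+1) : 'rV['F_q]_2 :=
  if (i < q)%N then row2 1 (i : nat)%:R else row2 0 1.

Lemma pline_col_scale_inj i j (d e : 'F_q) : d != 0 ->
  d *: pline_col i = e *: pline_col j -> i = j /\ d = e.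
Proof.
move=> d_neq0; rewrite /pline_col.
case: (ltnP i q) => iq; case: (ltnP j q) => jq;
  rewrite !scale_row2 ?mulr1 ?mulr0 => /row2_inj[].
- move=> <- /(mulfI d_neq0) /(congr1 val) /=; rewrite !val_Fp_nat // !modn_small //.
  by move/ord_inj.
- by move/eqP: d_neq0.
- by move=> <-; rewrite mul0r => d0; rewrite d0 eqxx in d_neq0.
- by split=> //; apply: ord_inj; have := ltn_ord i; have := ltn_ord j; lia.
Qed.

Lemma pline_col_scale_surj (u : 'rV['F_q]_2) : u != 0 ->
  exists i, exists2 d, d != 0 & d *: pline_col i = u.
Proof.
rewrite [u]row2E row2_eq0 negb_and /pline_col => u_neq0.
have [u0|u0] := eqVneq (u 0 0) 0.
  exists ord_max; exists (u 0 1); first by rewrite u0 eqxx in u_neq0.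
  have -> : (@ord_max q < q)%N = false by rewrite ltnn.
  by rewrite scale_row2 mulr0 mulr1 u0.
have ltq : (val (u 0 1 / u 0 0)%R < q)%N by rewrite -[X in (_ < X)%N](Fp_cast q_prime) ltn_ord.
exists (inord (val (u 0 1 / u 0 0))); exists (u 0 0) => //.
rewrite inordK ?(leqW ltq) // ltq scale_row2 mulr1.
by rewrite natr_Zp mulrCA divff // mulr1.
Qed.

Lemma colmul_count_pline (u : 'rV['F_q]_2) : colmul_count pline_col u = (u != 0).
Proof.
have [->|u_neq0] := eqVneq u 0.
  apply/eqP; rewrite cards_eq0; apply/eqP/setP => -[i d]; rewrite !inE /= scaler_eq0.
  have col_neq0 : pline_col i != 0.
    by rewrite /pline_col; case: ifP; rewrite row2_eq0 oner_eq0 ?andbF.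
  by rewrite (negbTE col_neq0) orbF andNb.
have [i [d d_neq0 Eu]] := pline_col_scale_surj u_neq0.
apply/eqP/cards1P; exists (i, d); apply/setP => -[j e]; rewrite !inE /= xpair_eqE.
apply/andP/andP => [[e_neq0 /eqP]|[/eqP-> /eqP->]]; last by rewrite d_neq0 Eu.
by rewrite -Eu => /(pline_col_scale_inj e_neq0)[-> ->].
Qed.

End SyndromeExamples.

Section Lines.
Variables n q : nat.
Implicit Types x y z : hvertex n q.

Definition line (j : 'I_n) x : {set hvertex n q} :=
  [set y : hvertex n q | [forall k, (k != j) ==> (x k == y k)]].

Lemma lineP j x y : reflect (forall k, k != j -> x k = y k) (y \in line j x).
Proof.
rewrite inE; apply: (iffP forallP) => [xy k kj|xy k]; first exact/eqP/(implyP (xy k)).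
by apply/implyP => /xy ->.
Qed.

Lemma line_sym j x y : (y \in line j x) = (x \in line j y).
Proof. by apply/lineP/lineP => xy k /xy ->. Qed.

Lemma line_eq j x y : y \in line j x -> line j y = line j x.
Proof.
move/lineP=> xy; apply/setP=> z; apply/lineP/lineP => yz k kj; first by rewrite xy ?yz.
by rewrite -xy ?yz.
Qed.

Lemma line_upd j x y : y \in line j x -> y = upd x j (y j).
Proof.
move/lineP=> xy; apply/ffunP=> k; rewrite ffunE.
by case: eqP => [->//|/eqP/xy].
Qed.

Lemma line_imset j x : line j x = [set upd x j v | v in 'I_q].
Proof.
apply/setP=> y; apply/idP/imsetP => [/line_upd yE|[v _ ->]]; first by exists (y j).
by apply/lineP=> k kj; rewrite upd_neq.
Qed.

Lemma card_line j x : #|line j x| = q.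
Proof. by rewrite line_imset card_imset ?card_ord //; apply: upd_inj. Qed.

Lemma card_lines_through x y :
  #|[set j | y \in line j x]| = if x == y then n else hadj x y.
Proof.
have [<-|/eqP xy] := eqVneq x y.
  by rewrite -[RHS](card_ord n); apply: eq_card => j; rewrite inE; apply/lineP.
have [/hadjP[i yxi ->]|nadj] := boolP (hadj x y).
  apply/eqP/cards1P; exists i; apply/setP=> j; rewrite inE in_set1.
  apply/idP/eqP => [/lineP xy'|->]; last by apply/lineP=> k ki; rewrite upd_neq.
  by apply: contraNeq yxi => ji; rewrite (xy' i) ?upd_eq // eq_sym.
apply/eqP; rewrite cards_eq0; apply/eqP/setP=> j; rewrite inE in_set0.
apply/negP=> /line_upd yE.
have [xyj|yxj] := eqVneq (x j) (y j).
  by apply: xy; rewrite yE -xyj upd_id.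
by move: nadj; rewrite yE; apply/negP/negPn/hadjP; exists j; rewrite upd_eq 1?eq_sym.
Qed.

Local Open Scope ring_scope.

Lemma sum_line_sums (V : nmodType) (g : hvertex n q -> V) x :
  \sum_j \sum_(y in line j x) g y = g x *+ n + \sum_(y | hadj x y) g y.
Proof.
rewrite (exchange_big_dep predT) //=.
under eq_bigr => y _ do rewrite sumr_const -cardsE card_lines_through.
rewrite (bigD1 x) //= eqxx big_mkcond [in RHS]big_mkcond; congr (_ + _).
apply: eq_bigr => y _; have [->|yx] := eqVneq y x; first by rewrite hadjxx.
by case: hadj.
Qed.

Lemma card_hadj x : #|[set y | hadj x y]| = (n * q.-1)%N.
Proof.
have := sum_line_sums (fun _ => 1%N) x.
under eq_bigr do rewrite sum1_card card_line.
rewrite sum_nat_const card_ord sum1_card -subn1 mulnBr muln1.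
by move=> ->; rewrite natn addKn; apply: eq_card => y; rewrite inE.
Qed.

Definition line_sum (V : nmodType) (g : hvertex n q -> V) j x :=
  \sum_(y in line j x) g y.

Lemma sum_mul_line_sum (R : comPzRingType) (g : hvertex n q -> R) j :
  q%:R * \sum_x g x * line_sum g j x = \sum_x line_sum g j x ^+ 2.
Proof.
have line_sumE x y : y \in line j x -> line_sum g j y = line_sum g j x.
  by rewrite /line_sum => /line_eq ->.
transitivity (\sum_x \sum_(y in line j x) g y * line_sum g j y).
  rewrite (exchange_big_dep predT) //= mulr_sumr; apply: eq_bigr => y _.
  rewrite sumr_const -cardsE.
  have -> : [set x | y \in line j x] = line j y by apply/setP=> x; rewrite inE line_sym.
  by rewrite card_line mulr_natl.
apply: eq_bigr => x _; rewrite expr2 [X in _ = X * _]/line_sum mulr_suml.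
by apply: eq_bigr => y /line_sumE ->.
Qed.

End Lines.

Lemma sumr_const_cond (V : nmodType) (T : finType) (P : pred T) (k : V) :
  (\sum_(i | P i) k = k *+ #|[set i | P i]|)%R.
Proof. by rewrite -sumr_const; apply: eq_bigl => i; rewrite inE. Qed.

Section ColoringBound.
Local Open Scope ring_scope.
Variables (n q b c : nat) (f : hvertex n q -> bool).
Hypothesis f_col : is_bc_coloring b c f.
Hypothesis q_gt0 : (0 < q)%N.

Definition bc_weight x : int := if f x then b%:Z else - c%:Z.

Lemma sum_bc_weight (P : pred (hvertex n q)) :
  \sum_(y | P y) bc_weight y =
  b%:Z * #|[set y | P y && f y]|%:Z - c%:Z * #|[set y | P y && ~~ f y]|%:Z.
Proof.
rewrite (bigID f) /=; congr (_ + _).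
  rewrite (eq_bigr (fun=> b%:Z)) => [|y /andP[_ fy]]; last by rewrite /bc_weight fy.
  by rewrite sumr_const_cond -mulr_natr natz.
rewrite (eq_bigr (fun=> - c%:Z)) => [|y /andP[_ /negbTE fy]]; last by rewrite /bc_weight fy.
by rewrite sumr_const_cond -mulr_natr natz mulNr.
Qed.

Lemma sum_hadj_bc_weight x :
  \sum_(y | hadj x y) bc_weight y = ((n * q.-1)%:Z - b%:Z - c%:Z) * bc_weight x.
Proof.
have nbrs_split : (#|[set y | hadj x y && f y]| + #|[set y | hadj x y && ~~ f y]|)%N
    = (n * q.-1)%N.
  rewrite -(card_hadj x) -(cardsID [set y | f y] [set y | hadj x y]).
  by congr (_ + _)%N; apply: eq_card => y; rewrite !inE // andbC.
case: f_col => _ _ card_nbr2 card_nbr1; rewrite (sum_bc_weight (hadj x)) /bc_weight.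
have [fx|fx] := boolP (f x).
  by move: nbrs_split; rewrite card_nbr2 //; lia.
by move: nbrs_split; rewrite card_nbr1 //; lia.
Qed.

Lemma sum_line_sums_bc_weight x :
  \sum_j line_sum bc_weight j x = ((n * q)%:Z - b%:Z - c%:Z) * bc_weight x.
Proof.
rewrite /line_sum sum_line_sums sum_hadj_bc_weight -mulr_natr mulrC -mulrDl natz.
have nq : (n * q.-1 + n = n * q)%N by rewrite -[in RHS](prednK q_gt0) mulnS addnC.
by congr (_ * _); lia.
Qed.

Lemma bc_weight_form :
  ((n * q)%:Z - b%:Z - c%:Z) * \sum_x bc_weight x ^+ 2 =
  \sum_j \sum_x bc_weight x * line_sum bc_weight j x.
Proof.
rewrite exchange_big mulr_sumr; apply: eq_bigr => x _.
by rewrite -mulr_sumr sum_line_sums_bc_weight expr2 mulrCA.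
Qed.

Lemma line_form_ge0 j : 0 <= \sum_x bc_weight x * line_sum bc_weight j x.
Proof.
have q_pos : 0 < q%:R :> int by rewrite ltr0n.
rewrite -(pmulr_rge0 _ q_pos) sum_mul_line_sum.
by apply: sumr_ge0 => x _; apply: sqr_ge0.
Qed.

Hypothesis b_gt0 : (0 < b)%N.

Lemma sum_bc_weight_sqr_gt0 : 0 < \sum_x bc_weight x ^+ 2.
Proof.
case: f_col => -[x fx] _ _ _.
rewrite (bigD1 x) //= ltr_pwDl ?sumr_ge0 // => [|y _]; last exact: sqr_ge0.
by rewrite /bc_weight fx exprn_gt0 // ltr0n.
Qed.

Theorem bc_le_nq : (b + c <= n * q)%N.
Proof.
have : 0 <= ((n * q)%:Z - b%:Z - c%:Z) * \sum_x bc_weight x ^+ 2.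
  by rewrite bc_weight_form; apply: sumr_ge0 => j _; apply: line_form_ge0.
by rewrite pmulr_lge0 ?sum_bc_weight_sqr_gt0 //; lia.
Qed.

Lemma tight_line_sum_bc_weight (tight : (b + c = n * q)%N) j x :
  line_sum bc_weight j x = 0.
Proof.
have gap0 : (n * q)%:Z - b%:Z - c%:Z = 0 by lia.
have form0 : \sum_j \sum_x bc_weight x * line_sum bc_weight j x = 0.
  by rewrite -bc_weight_form gap0 mul0r.
have form_j0 := psumr_eq0P (fun j _ => line_form_ge0 j) form0 (i := j) isT.
have sqr0 : \sum_y line_sum bc_weight j y ^+ 2 = 0.
  by rewrite -sum_mul_line_sum form_j0 mulr0.
have /eqP := psumr_eq0P (fun y _ => sqr_ge0 (line_sum bc_weight j y)) sqr0 (i := x) isT.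
by rewrite sqrf_eq0 => /eqP.
Qed.

Lemma tight_dvdn_gcd : (b + c = n * q)%N -> (n %| gcdn b c)%N.
Proof.
move=> tight; have n_gt0 : (0 < n)%N by move: tight; case: (n) => //; lia.
case: f_col => -[x fx] _ _ _.
have := tight_line_sum_bc_weight tight (Ordinal n_gt0) x.
rewrite /line_sum (sum_bc_weight (mem (line _ x))).
set L := line _ x; set m := #|[set y | _ & f y]|; set m' := #|[set y | _ & ~~ f y]|.
have split_line : (m + m' = q)%N.
  rewrite -(card_line (Ordinal n_gt0) x) -(cardsID [set y | f y] L).
  by congr (_ + _)%N; apply: eq_card => y; rewrite !inE // andbC.
(* A balanced line gives b m = c m', so c q = (b + c) m = n q m. *)
move=> balance; have c_eq : c = (n * m)%N.
  by apply/eqP; rewrite -(eqn_pmul2r q_gt0); apply/eqP; nia.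
have n_dvd_c : (n %| c)%N by rewrite c_eq dvdn_mulr.
by rewrite dvdn_gcd n_dvd_c -(dvdn_addl b n_dvd_c) tight dvdn_mulr.
Qed.

End ColoringBound.

Theorem corollary3 (q b c : nat) (hq : prime q) (hb : 0 < b) (hc : 0 < c) :
  ((b + c) %/ gcdn b c = q -> is_threshold b c q (gcdn b c)) /\
  (gcdn b c = 1 -> b + c = q ^ 2 -> is_threshold b c q q.+1).
Proof.
have [q_gt0 q_gt1] := (prime_gt0 hq, prime_gt1 hq).
split=> [q_eq | gcd1 bc_eq].
- set d := gcdn b c; have d_gt0 : 0 < d by rewrite gcdn_gt0 hb.
  have b_eq : b = d * (b %/ d) by rewrite mulnC divnK ?dvdn_gcdl.
  have c_eq : c = d * (c %/ d) by rewrite mulnC divnK ?dvdn_gcdr.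
  have q_eq' : b %/ d + c %/ d = q by rewrite -divnDl ?dvdn_gcdl.
  have [b'_gt0 c'_gt0] : 0 < b %/ d /\ 0 < c %/ d.
    by rewrite !divn_gt0 // (dvdn_leq hb (dvdn_gcdl b c)) (dvdn_leq hc (dvdn_gcdr b c)).
  split=> [|n n_lt_d [f f_col]].
    have sum_col := syndrome_complete_quotient hq (@colmul_count_const q d).
    have := complete_quotient_coloring (k := c %/ d) sum_col q_gt0 d_gt0.
    rewrite card_Fp // -[in q - _]q_eq' addnK -b_eq -c_eq; apply.
    by rewrite c'_gt0 -q_eq' -{1}[c %/ d]add0n ltn_add2r.
  have := bc_le_nq f_col q_gt0 hb.
  by rewrite b_eq c_eq -mulnDr q_eq' leq_pmul2r // leqNgt n_lt_d.
split=> [|n n_le_q [f f_col]].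
  have pline_syndrome := syndrome_complete_quotient hq
    (fun u => etrans (colmul_count_pline hq u) (esym (mul1n _))).
  have := complete_quotient_coloring (k := c) pline_syndrome q_gt0 isT.
  rewrite card_mx card_Fp // mul1n -bc_eq addnK !mul1n; apply.
  by rewrite hc -{1}[c]add0n ltn_add2r.
have n_eq : n = q.
  have := bc_le_nq f_col q_gt0 hb; rewrite bc_eq expnS expn1 leq_pmul2r // => q_le_n.
  by apply/eqP; rewrite eqn_leq -ltnS n_le_q.
have := tight_dvdn_gcd f_col q_gt0 hb; rewrite n_eq bc_eq gcd1 expnS expn1 dvdn1.
by move=> /(_ erefl) /eqP q1; rewrite q1 in q_gt1.
Qed.
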